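(* Let $p,q\in\mathbb{N}$ be coprime, $k\in\mathbb{N}$ squarefree, $m=-pk$, $n=qk$. (i) If the quadratic forms $X^2+mY^2$ and $X^2+nY^2$ are concordant due to $4$- or $8$-torsion, then $k=1$. (ii) If they are concordant due to $3$- or $6$-torsion, then $k=1$ or $k=3$.
   Context: For nonzero integers $m\neq n$, the forms $X^2+mY^2$ and $X^2+nY^2$ are concordant if the system $X^2+mY^2=Z^2$, $X^2+nY^2=W^2$ has an integer solution with $Y\neq0$. Let $Q(m,n)\subset\mathbb{P}^3$ be the curve $X_0^2+mX_1^2=X_2^2,\ X_0^2+nX_1^2=X_3^2$ and $E(m,n)$ the elliptic curve $y^2=x(x+m)(x+n)$ (projectively $Y^2T=X(X+mT)(X+nT)$, coordinates $(T:X:Y)$). There is an isomorphism of curves $\varphi:Q(m,n)\to E(m,n)$ extending the rational map $(X_0:X_1:X_2:X_3)\mapsto\bigl(nX_2-mX_3+(m-n)X_0 : mn(X_3-X_2) : mn(m-n)X_1\bigr)$; it maps the trivial points $(1:0:\pm1:\pm1)$ to the neutral element and the 2-torsion points, and every nontrivial rational solution to a rational point of order $>2$. The forms are said to be concordant due to $N$-torsion if some nontrivial rational solution $(X_0:X_1:X_2:X_3)$ (i.e. with $X_1\neq0$) is mapped by $\varphi$ to a rational point of $E(m,n)$ of order exactly $N$; equivalently, $E(m,n)(\mathbb{Q})$ has a point of order $N$. *)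

From HB Require Import structures.
From mathcomp Require Import all_boot all_order all_algebra.
Set Implicit Arguments. Unset Strict Implicit. Unset Printing Implicit Defensive.
Import Order.TTheory GRing.Theory Num.Theory.
Local Open Scope ring_scope.

(* A point of the projective Weierstrass curve: the neutral element
   (point at infinity, (T:X:Y) = (0:0:1)) or an affine point (x, y). *)
Inductive ecpt : Type := EInf | EPt of rat & rat.

Definition on_E (m n : int) (P : ecpt) : Prop :=
  match P with
  | EInf => True
  | EPt x y => y ^+ 2 = x * (x + m%:~R) * (x + n%:~R)
  end.

(* Chord-tangent group law on y^2 = x^3 + a x^2 + b x with a = m+n, b = m n. *)
Definition ec_add (m n : int) (P Q : ecpt) : ecpt :=
  let a : rat := (m + n)%:~R in
  let b : rat := (m * n)%:~R in
  match P, Q with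
  | EInf, _ => Q
  | _, EInf => P
  | EPt x1 y1, EPt x2 y2 =>
      if (x1 == x2) && (y1 == - y2) then EInf
      else
        let l := if x1 == x2 then (3%:R * x1 ^+ 2 + 2%:R * a * x1 + b) / (2%:R * y1)
                 else (y2 - y1) / (x2 - x1) in
        let x3 := l ^+ 2 - a - x1 - x2 in
        EPt x3 (- (y1 + l * (x3 - x1)))
  end.

Fixpoint ec_mul (m n : int) (d : nat) (P : ecpt) : ecpt :=
  match d with
  | O => EInf
  | S d' => ec_add m n P (ec_mul m n d' P)
  end.

Definition has_order (m n : int) (P : ecpt) (N : nat) : Prop :=
  (0 < N)%N /\ ec_mul m n N P = EInf /\
  forall d : nat, (0 < d)%N -> (d < N)%N -> ec_mul m n d P <> EInf.

(* The isomorphism phi : Q(m,n) -> E(m,n), on points with X1 <> 0: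
   (X0:X1:X2:X3) |-> (T:X:Y) = (n X2 - m X3 + (m-n) X0 : mn(X3-X2) : mn(m-n) X1). *)
Definition phi (m n : int) (X0 X1 X2 X3 : rat) : ecpt :=
  let M : rat := m%:~R in
  let N : rat := n%:~R in
  let T := N * X2 - M * X3 + (M - N) * X0 in
  let X := M * N * (X3 - X2) in
  let Y := M * N * (M - N) * X1 in
  if T == 0 then EInf else EPt (X / T) (Y / T).

(* The forms X^2+mY^2, X^2+nY^2 are concordant due to N-torsion: some
   nontrivial rational point (X1 <> 0) of Q(m,n) is mapped by phi to a point
   of order exactly N of E(m,n)(Q). *)
Definition concordant_torsion (N : nat) (m n : int) : Prop :=
  exists X0 X1 X2 X3 : rat,
    [/\ X0 ^+ 2 + m%:~R * X1 ^+ 2 = X2 ^+ 2,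
        X0 ^+ 2 + n%:~R * X1 ^+ 2 = X3 ^+ 2,
        X1 != 0 &
        has_order m n (phi m n X0 X1 X2 X3) N].

Definition squarefree (k : nat) : Prop :=
  (0 < k)%N /\ forall d : nat, (1 < d)%N -> ~~ (d * d %| k)%N.

(* If [P] has order 4 or 8,
   then [2P] or [4P] is a rational 2-torsion point [(e, 0)] which is a double,
   so [e], [e + m], [e + n] are squares; for [m = -pk], [n = qk] this forces
   [e = pk], so [pk] and [(p + q)k] are rational squares and any prime of [k]
   would divide both [p] and [q].  If [P] has order 3 or 6, then [R = P] or
   [R = 2P] satisfies [2R = -R], so [X = x(R)] is a fixed point of the
   duplication map and [X], [X + m], [X + n] are squares [u^2], [v^2], [w^2]
   with [uv + uw + vw = 0]; putting [t = (u + v)/u = a/b] in lowest terms gives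
   [p b^3 (2a - b) = q a^3 (a - 2b)], and [k] times [|a^3 (a - 2b)| / p] is a
   square, while [3] is the only prime that can divide both [a^3 (a - 2b)] and
   [b^3 (2a - b)].
   The group law is never shown to be associative: multiples [dP] are only
   compared through the cancellation [(d + 1)P - P = dP]. *)

From HB Require Import structures.
From mathcomp Require Import all_boot all_order all_algebra.
From mathcomp Require Import ring lra zify.
Import Order.TTheory GRing.Theory Num.Theory.
Set Implicit Arguments. Unset Strict Implicit. Unset Printing Implicit Defensive.
Local Open Scope ring_scope.

(** * Lines meeting the cubic *)

Section CubicLines.

Variables (F : fieldType) (M N : F).

Definition cubic (t : F) : F := t * (t + M) * (t + N).

Definition dcubic (t : F) : F := 3%:R * t ^+ 2 + 2%:R * (M + N) * t + M * N.

(* Vieta's relations for the three abscissae of the intersection of the line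
   [y = c + l x] with [y^2 = cubic x]. *)
Definition line_cut (c l x1 x2 x3 : F) : Prop :=
  [/\ M + N - l ^+ 2 + (x1 + x2 + x3) = 0,
      M * N - 2%:R * c * l - (x1 * x2 + x1 * x3 + x2 * x3) = 0 &
      x1 * x2 * x3 - c ^+ 2 = 0].

Definition square (r : F) : Prop := exists z, r = z ^+ 2.

(* For a root [e] of the cubic, [(e, 0)] is a double in the group of rational
   points exactly when these three numbers are squares. *)
Definition shifted_squares (e : F) : Prop :=
  [/\ square e, square (e + M) & square (e + N)].

Lemma line_cut_factor c l x1 x2 x3 t : line_cut c l x1 x2 x3 ->
  cubic t - (c + l * t) ^+ 2 = (t - x1) * (t - x2) * (t - x3).
Proof.
case=> h1 h2 h3; apply/eqP; rewrite -subr_eq0; apply/eqP.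
transitivity (t ^+ 2 * (M + N - l ^+ 2 + (x1 + x2 + x3))
  + t * (M * N - 2%:R * c * l - (x1 * x2 + x1 * x3 + x2 * x3))
  + (x1 * x2 * x3 - c ^+ 2)); first by rewrite /cubic; ring.
by rewrite h1 h2 h3; ring.
Qed.

Lemma line_cutC12 c l x1 x2 x3 : line_cut c l x1 x2 x3 -> line_cut c l x2 x1 x3.
Proof. by case=> h1 h2 h3; split; [rewrite -h1 | rewrite -h2 | rewrite -h3]; ring. Qed.

Lemma line_cutC13 c l x1 x2 x3 : line_cut c l x1 x2 x3 -> line_cut c l x3 x2 x1.
Proof. by case=> h1 h2 h3; split; [rewrite -h1 | rewrite -h2 | rewrite -h3]; ring. Qed.

Lemma line_cutN c l x1 x2 x3 : line_cut c l x1 x2 x3 -> line_cut (- c) (- l) x1 x2 x3.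
Proof. by case=> h1 h2 h3; split; [rewrite -h1 | rewrite -h2 | rewrite -h3]; ring. Qed.

Lemma line_cut_third c l x1 x2 x3 : line_cut c l x1 x2 x3 ->
  x3 = l ^+ 2 - (M + N) - x1 - x2.
Proof. by case=> h1 _ _; rewrite -[x3]subr0 -h1; ring. Qed.

Lemma line_cut_on c l x1 x2 x3 : line_cut c l x1 x2 x3 -> (c + l * x1) ^+ 2 = cubic x1.
Proof.
move=> /(line_cut_factor x1); rewrite subrr !mul0r => /eqP.
by rewrite subr_eq0 => /eqP.
Qed.

Lemma line_cut_tangent c l x x3 : line_cut c l x x x3 -> dcubic x = 2%:R * l * (c + l * x).
Proof.
case=> h1 h2 _; apply/eqP; rewrite -subr_eq0; apply/eqP.
transitivity (2%:R * x * (M + N - l ^+ 2 + (x + x + x3)) +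
   (M * N - 2%:R * c * l - (x * x + x * x3 + x * x3))); first by rewrite /dcubic; ring.
by rewrite h1 h2; ring.
Qed.

Lemma cubic_nonsingular x : M != 0 -> N != 0 -> M != N -> cubic x = 0 -> dcubic x != 0.
Proof.
move=> hM hN hMN /eqP; rewrite /cubic /dcubic !mulf_eq0 => /orP[/orP[]|] /eqP h.
- rewrite h (_ : _ + _ = M * N); last by ring.
  by rewrite mulf_neq0.
- have -> : x = - M by rewrite -[x]subr0 -h; ring.
  rewrite (_ : _ + _ = M * (M - N)); last by ring.
  by rewrite mulf_neq0 // subr_eq0.
- have -> : x = - N by rewrite -[x]subr0 -h; ring.
  rewrite (_ : _ + _ = N * (N - M)); last by ring.
  by rewrite mulf_neq0 // subr_eq0 eq_sym.
Qed.

Lemma line_cut_of_points c l x1 x2 :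
  (c + l * x1) ^+ 2 = cubic x1 -> (c + l * x2) ^+ 2 = cubic x2 ->
  (x1 != x2 \/ x1 = x2 /\ dcubic x1 = 2%:R * l * (c + l * x1)) ->
  line_cut c l x1 x2 (l ^+ 2 - (M + N) - x1 - x2).
Proof.
move=> e1 e2 hcase; set x3 := l ^+ 2 - _ - _ - _.
set al := M * N - 2%:R * c * l - (x1 * x2 + x1 * x3 + x2 * x3).
set be := x1 * x2 * x3 - c ^+ 2.
have hA1 : al * x1 + be = 0 by rewrite -(subrr (cubic x1)) -{2}e1 /cubic /al /be /x3; ring.
have hA2 : al * x2 + be = 0 by rewrite -(subrr (cubic x2)) -{2}e2 /cubic /al /be /x3; ring.
have al0 : al = 0.
  case: hcase => [hne | [ex hd]].
    have : al * (x1 - x2) = 0.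
      by rewrite mulrBr -[al * x1](addrK be) hA1 -[al * x2](addrK be) hA2; ring.
    have hne' : x1 - x2 != 0 by rewrite subr_eq0.
    by move/eqP; rewrite mulf_eq0 (negbTE hne') orbF => /eqP.
  rewrite /al /x3 -ex; rewrite -(subrr (dcubic x1)) {2}hd /dcubic; ring.
split; [by rewrite /x3; ring | exact: al0 |].
by move: hA1; rewrite al0 mul0r add0r.
Qed.

Lemma line_cut_shift_sq c l x1 x2 x3 s : cubic (- s) = 0 -> line_cut c l x1 x2 x3 ->
  (x1 + s) * (x2 + s) * (x3 + s) = (c - l * s) ^+ 2.
Proof.
move=> h0 /(line_cut_factor (- s)); rewrite h0 => h.
have -> : (c - l * s) ^+ 2 = - (0 - (c + l * - s) ^+ 2) by ring.
by rewrite h; ring.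
Qed.

Lemma cubic_root0 : cubic (- 0) = 0.
Proof. by rewrite /cubic oppr0 !mul0r. Qed.

Lemma cubic_rootM : cubic (- M) = 0.
Proof. by rewrite /cubic addNr mulr0 mul0r. Qed.

Lemma cubic_rootN : cubic (- N) = 0.
Proof. by rewrite /cubic addNr mulr0. Qed.

Lemma cubic_neq0 x : cubic x != 0 -> [/\ x + 0 != 0, x + M != 0 & x + N != 0].
Proof. by rewrite /cubic !mulf_eq0 addr0 !negb_or => /andP[/andP[-> ->] ->]. Qed.

Lemma line_cut_dup_shift_sq c l x x2 s : cubic (- s) = 0 -> line_cut c l x x x2 ->
  x + s != 0 -> square (x2 + s).
Proof.
move=> h0 hR hx; exists ((c - l * s) / (x + s)).
by rewrite expr_div_n -(line_cut_shift_sq h0 hR); field.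
Qed.

Lemma shifted_squares_dup c l x x2 : line_cut c l x x x2 -> cubic x != 0 ->
  shifted_squares x2.
Proof.
move=> hR /cubic_neq0 [h0 hM hN]; split.
- by rewrite -[x2]addr0; exact: (line_cut_dup_shift_sq cubic_root0 hR h0).
- exact: (line_cut_dup_shift_sq cubic_rootM hR hM).
- exact: (line_cut_dup_shift_sq cubic_rootN hR hN).
Qed.

Lemma square_of_products (u1 u2 u3 u4 r1 r2 r3 : F) : u1 != 0 -> u2 != 0 -> u3 != 0 ->
  u1 * u1 * u2 = r1 ^+ 2 -> u1 * u2 * u3 = r2 ^+ 2 -> u1 * u3 * u4 = r3 ^+ 2 ->
  square u4.
Proof.
move=> h1 h2 h3 e1 e2 e3; exists (r3 * r1 / (r2 * u1)).
have r2_0 : r2 != 0.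
  by apply: contraNneq (mulf_neq0 (mulf_neq0 h1 h2) h3) => r0; rewrite e2 r0 expr0n.
rewrite expr_div_n !exprMn -e1 -e2 -e3; field.
by rewrite h1 h2 h3.
Qed.

(* x-coordinates of [P], [2P = P + P], [3P = P + 2P], [4P = P + 3P]. *)
Lemma shifted_squares_quadruple c1 l1 c2 l2 c3 l3 x x2 x3 e :
  line_cut c1 l1 x x x2 -> line_cut c2 l2 x x2 x3 -> line_cut c3 l3 x x3 e ->
  cubic x != 0 -> cubic x2 != 0 -> cubic x3 != 0 -> shifted_squares e.
Proof.
move=> h1 h2 h3 /cubic_neq0[a0 aM aN] /cubic_neq0[b0 bM bN] /cubic_neq0[d0 dM dN].
have shift s : cubic (- s) = 0 -> x + s != 0 -> x2 + s != 0 -> x3 + s != 0 -> square (e + s).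
  move=> hs hx hx2 hx3; exact: (square_of_products hx hx2 hx3
    (line_cut_shift_sq hs h1) (line_cut_shift_sq hs h2) (line_cut_shift_sq hs h3)).
split; last 2 first.
- exact: shift cubic_rootM aM bM dM.
- exact: shift cubic_rootN aN bN dN.
by rewrite -[e]addr0; exact: shift cubic_root0 a0 b0 d0.
Qed.

Lemma line_cut_dup c l x x2 : line_cut c l x x x2 ->
  4%:R * cubic x * x2 = (x ^+ 2 - M * N) ^+ 2.
Proof.
move=> hR; have ht := line_cut_tangent hR; have ho := line_cut_on hR.
rewrite (line_cut_third hR) -ho.
transitivity ((2%:R * l * (c + l * x)) ^+ 2 - 4%:R * (c + l * x) ^+ 2 * (M + N + 2%:R * x));
  first by ring.
by rewrite -ht ho /cubic /dcubic; ring.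
Qed.

(* Translating by the 2-torsion point [(e, 0)] commutes with duplication. *)
Lemma dup_translate e x : cubic e = 0 -> x - e != 0 ->
  let t := cubic x / (x - e) ^+ 2 - (M + N) - x - e in
  cubic t * (x ^+ 2 - M * N) ^+ 2 = cubic x * (t ^+ 2 - M * N) ^+ 2.
Proof.
rewrite /cubic => /eqP; rewrite !mulf_eq0 => /orP[/orP[]|] /eqP he hx /=.
- by rewrite he subr0 in hx *; field.
- have eM : e = - M by rewrite -[e]subr0 -he; ring.
  by rewrite eM opprK in hx *; field.
- have eN : e = - N by rewrite -[e]subr0 -he; ring.
  by rewrite eN opprK in hx *; field.
Qed.

(* If [2P] has abscissa [x2] and [P + 2P] is the 2-torsion point [(e, 0)],
   then [2(2P) = -(2P)], i.e. [x2] is a fixed point of duplication. *)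
Lemma line_cut_dup_fixed c1 l1 c2 l2 x x2 e :
  line_cut c1 l1 x x x2 -> line_cut c2 l2 x x2 e -> c2 + l2 * e = 0 ->
  cubic e = 0 -> cubic x != 0 ->
  4%:R * cubic x2 * x2 = (x2 ^+ 2 - M * N) ^+ 2.
Proof.
move=> R1 R2 he hce hcx.
have hxe : x - e != 0.
  by apply: contraNneq hcx => /eqP; rewrite subr_eq0 => /eqP ->; rewrite hce.
have hc2 : c2 = - (l2 * e) by rewrite -[c2]subr0 -he; ring.
have hl : l2 ^+ 2 = cubic x / (x - e) ^+ 2.
  by rewrite -(line_cut_on R2) hc2; field.
have hx2 : x2 = cubic x / (x - e) ^+ 2 - (M + N) - x - e.
  by rewrite -hl (line_cut_third R2); ring.
apply: (mulfI hcx).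
transitivity (cubic x2 * (4%:R * cubic x * x2)); first by ring.
by rewrite (line_cut_dup R1) hx2 dup_translate.
Qed.

Lemma cubic_dehomogenize (T X Y : F) : T != 0 ->
  Y ^+ 2 * T = X * (X + M * T) * (X + N * T) -> (Y / T) ^+ 2 = cubic (X / T).
Proof.
move=> hT h; apply/eqP; rewrite -subr_eq0; apply/eqP.
transitivity ((Y ^+ 2 * T - X * (X + M * T) * (X + N * T)) / T ^+ 3).
  by rewrite /cubic; field.
by rewrite h subrr mul0r.
Qed.

(* With [X = u^2], [X + M = v^2], [X + N = w^2] the fixed point equation of
   duplication factors into the four sign variants of [uv + uw + vw = 0]. *)
Lemma dup_fixed_triangle X : M * N != 0 ->
  shifted_squares X -> 4%:R * cubic X * X = (X ^+ 2 - M * N) ^+ 2 ->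
  exists u v w, [/\ u != 0, M = v ^+ 2 - u ^+ 2, N = w ^+ 2 - u ^+ 2
                  & u * v + u * w + v * w = 0].
Proof.
move=> hMN [[u hu] [v hv] [w hw]] hq.
have eM : M = v ^+ 2 - u ^+ 2 by rewrite -hv hu; ring.
have eN : N = w ^+ 2 - u ^+ 2 by rewrite -hw hu; ring.
have u0 : u != 0.
  apply: contraNneq hMN => u0; move: hq.
  by rewrite hu u0 /cubic !(expr0n, mul0r, mulr0) /= sub0r sqrrN => /esym/eqP; rewrite sqrf_eq0.
have : (u * v + u * w + v * w) * (u * v + u * w - v * w) * (u * v - u * w + v * w)
       * (u * v - u * w - v * w) = 0.
  transitivity (- (4%:R * cubic X * X - (X ^+ 2 - M * N) ^+ 2));
    last by rewrite hq subrr oppr0.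
  by rewrite /cubic eM eN hu; ring.
move/eqP; rewrite !mulf_eq0 -!orbA => /or4P[] /eqP h.
- by exists u, v, w.
- exists (- u), v, w; rewrite oppr_eq0 sqrrN; split=> //.
  by rewrite -[RHS]oppr0 -h; ring.
- exists u, (- v), w; rewrite sqrrN; split=> //.
  by rewrite -[RHS]oppr0 -h; ring.
- by exists u, v, (- w); rewrite sqrrN; split=> //; rewrite -h; ring.
Qed.

Lemma triangle_param (u v w : F) : u != 0 -> u * v + u * w + v * w = 0 ->
  let t := (u + v) / u in
  [/\ t != 0, v ^+ 2 - u ^+ 2 = u ^+ 2 * t * (t - 2%:R)
    & w ^+ 2 - u ^+ 2 = u ^+ 2 * (1 - 2%:R * t) / t ^+ 2].
Proof.
move=> u0 hrel t.
have uv0 : u + v != 0.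
  have : (u + v) * (u + w) = u ^+ 2 by rewrite -[RHS]addr0 -hrel; ring.
  by apply: contra_eq_neq => ->; rewrite mul0r eq_sym sqrf_eq0.
have wE : w = - (u * v) / (u + v).
  by apply: (mulIf uv0); rewrite divfK // -[RHS]addr0 -hrel; ring.
split; first by rewrite mulf_neq0 ?invr_eq0.
- by rewrite /t; field.
- by rewrite /t wE; field; rewrite u0 uv0.
Qed.

End CubicLines.

(** * The chord-tangent law on [E(m, n)] *)

Definition ec_opp (P : ecpt) : ecpt :=
  if P is EPt x y then EPt x (- y) else EInf.

Section GroupLaw.

Variables m n : int.
Local Notation M := (m%:~R : rat).
Local Notation N := (n%:~R : rat).

Lemma ec_addr0 P : ec_add m n P EInf = P.
Proof. by case: P. Qed.

Lemma ec_addrN x y : ec_add m n (EPt x y) (EPt x (- y)) = EInf.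
Proof. by rewrite /= opprK !eqxx. Qed.

Lemma ec_add_eq0 x y Q : ec_add m n (EPt x y) Q = EInf -> Q = EPt x (- y).
Proof.
case: Q => // x2 y2; rewrite /ec_add /=.
by case: ifP => // /andP[/eqP <- /eqP ->] _; rewrite opprK.
Qed.

Lemma line_cut_ec_add x1 y1 x2 y2 x3 y3 :
  y1 ^+ 2 = cubic M N x1 -> y2 ^+ 2 = cubic M N x2 ->
  ec_add m n (EPt x1 y1) (EPt x2 y2) = EPt x3 y3 ->
  exists c l, [/\ line_cut M N c l x1 x2 x3, y1 = c + l * x1,
                  y2 = c + l * x2 & y3 = - (c + l * x3)].
Proof.
move=> e1 e2; rewrite /ec_add intrD intrM.
case: (eqVneq x1 x2) => [ex | hne].
- subst x2; rewrite /=; case: eqP => // hy [<- <-].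
  have ey : y2 = y1.
    move: e2; rewrite -e1 => /eqP; rewrite eqf_sqr => /orP[/eqP // | /eqP h].
    by case: hy; rewrite h opprK.
  subst y2; have hy0 : y1 != 0 by apply: contra_not_neq hy => ->; rewrite oppr0.
  set l := _ / (2%:R * y1).
  have hc : y1 = (y1 - l * x1) + l * x1 by ring.
  exists (y1 - l * x1), l; split=> //; last by ring.
  apply: line_cut_of_points; rewrite -?hc //.
  by right; split=> //; rewrite /l /dcubic; field.
- rewrite /= => -[<- <-].
  set l := (y2 - y1) / (x2 - x1).
  have hc : y1 = (y1 - l * x1) + l * x1 by ring.
  have hc2 : y2 = (y1 - l * x1) + l * x2 by rewrite /l; field; rewrite subr_eq0 eq_sym.
  exists (y1 - l * x1), l; split=> //; last by ring.
  by apply: line_cut_of_points; rewrite -?hc -?hc2 //; left.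
Qed.

Lemma ec_add_on P Q : on_E m n P -> on_E m n Q -> on_E m n (ec_add m n P Q).
Proof.
case: P => [|x1 y1] //; case: Q => [|x2 y2] // e1 e2.
case E: (ec_add m n _ _) => [|x3 y3] //.
have [c [l [hR _ _ ->]]] := line_cut_ec_add e1 e2 E.
by rewrite /= sqrrN (line_cut_on (line_cutC13 hR)).
Qed.

Hypotheses (hM : M != 0) (hN : N != 0) (hMN : M != N).

Lemma ec_add_line c l x1 x2 x3 : line_cut M N c l x1 x2 x3 ->
  ec_add m n (EPt x1 (c + l * x1)) (EPt x2 (c + l * x2)) = EPt x3 (- (c + l * x3)).
Proof.
move=> hR; have -> := line_cut_third hR.
rewrite /ec_add intrD intrM.
case: (eqVneq x1 x2) => [ex | hne].
- subst x2; rewrite /=; have ht := line_cut_tangent hR.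
  case: eqP => [hy | hy].
    have hy0 : c + l * x1 = 0 by move: hy; set y := c + l * x1; lra.
    have : cubic M N x1 = 0 by rewrite -(line_cut_on hR) hy0 expr0n.
    by move/(cubic_nonsingular hM hN hMN)/negP; rewrite ht hy0 mulr0 eqxx.
  have hy0 : c + l * x1 != 0 by apply: contra_not_neq hy => ->; rewrite oppr0.
  have -> : dcubic M N x1 / (2%:R * (c + l * x1)) = l by rewrite ht; field.
  by congr EPt; ring.
- rewrite /=.
  have -> : (c + l * x2 - (c + l * x1)) / (x2 - x1) = l by field; rewrite subr_eq0 eq_sym.
  by congr EPt; ring.
Qed.

Lemma ec_addC P Q : on_E m n P -> on_E m n Q -> ec_add m n P Q = ec_add m n Q P.
Proof.
case: P => [|x1 y1]; case: Q => [|x2 y2] // e1 e2.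
case E: (ec_add m n (EPt x1 y1) _) => [|x3 y3].
  by move: (ec_add_eq0 E) => [-> ->]; rewrite -{2}(opprK y1) ec_addrN.
have [c [l [hR -> -> ->]]] := line_cut_ec_add e1 e2 E.
by rewrite (ec_add_line (line_cutC12 hR)).
Qed.

Lemma ec_oppD P Q : on_E m n P -> on_E m n Q ->
  ec_add m n (ec_opp P) (ec_opp Q) = ec_opp (ec_add m n P Q).
Proof.
case: P => [|x1 y1]; case: Q => [|x2 y2] // e1 e2.
case E: (ec_add m n (EPt x1 y1) _) => [|x3 y3].
  by move: (ec_add_eq0 E) => [-> ->] /=; rewrite !opprK !eqxx.
have [c [l [hR -> -> ->]]] := line_cut_ec_add e1 e2 E.
have opp_line x : - (c + l * x) = - c + - l * x by ring.
by rewrite [ec_opp (EPt x1 _)]/= [ec_opp (EPt x2 _)]/= !opp_line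
  (ec_add_line (line_cutN hR)) /=; congr EPt; ring.
Qed.

Lemma ec_addK P Q : on_E m n P -> on_E m n Q ->
  ec_add m n (ec_add m n P Q) (ec_opp Q) = P.
Proof.
case: P => [|x1 y1]; case: Q => [|x2 y2] // e1 e2; first exact: ec_addrN.
case E: (ec_add m n (EPt x1 y1) _) => [|x3 y3].
  by move: (ec_add_eq0 E) => [-> ->] /=; rewrite opprK.
have [c [l [hR -> -> ->]]] := line_cut_ec_add e1 e2 E.
have opp_line x : - (c + l * x) = - c + - l * x by ring.
by rewrite [ec_opp _]/= !opp_line (ec_add_line (line_cutC13 (line_cutN hR))); congr EPt; ring.
Qed.

Lemma ec_mulS d P : ec_mul m n d.+1 P = ec_add m n P (ec_mul m n d P).
Proof. by []. Qed.

Lemma ec_mul1 P : ec_mul m n 1 P = P.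
Proof. by rewrite ec_mulS ec_addr0. Qed.

Lemma ec_mul_on d P : on_E m n P -> on_E m n (ec_mul m n d P).
Proof. by move=> hP; elim: d => [|d IH] //=; apply: ec_add_on. Qed.

Lemma ec_mulSK d P : on_E m n P ->
  ec_add m n (ec_mul m n d.+1 P) (ec_opp P) = ec_mul m n d P.
Proof.
move=> hP; have hd := ec_mul_on d hP.
by rewrite /= (ec_addC hP hd) (ec_addK hd hP).
Qed.

Lemma ec_mul_addnK a b d P : on_E m n P ->
  ec_mul m n (a + d) P = ec_mul m n (b + d) P -> ec_mul m n a P = ec_mul m n b P.
Proof.
move=> hP; elim: d => [|d IH]; first by rewrite !addn0.
by rewrite !addnS => /(congr1 (ec_add m n ^~ (ec_opp P))); rewrite !ec_mulSK.
Qed.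

Lemma ec_mul_subn r d P : on_E m n P -> ec_mul m n r P = EInf -> (d <= r)%N ->
  ec_mul m n (r - d) P = ec_opp (ec_mul m n d P).
Proof.
move=> hP hr; elim: d => [|d IH] hd; first by rewrite subn0 hr.
rewrite -(ec_mulSK (r - d.+1) hP) -subSn // subSS.
have hd' := ec_mul_on d hP.
by rewrite IH 1?ltnW // (ec_oppD hd' hP) (ec_addC hd' hP).
Qed.

Lemma on_E_cubic_neq0 x y : on_E m n (EPt x y) -> y != 0 -> cubic M N x != 0.
Proof. by move=> /= e; rewrite /cubic -e sqrf_eq0. Qed.

Lemma has_order_affine r d P : on_E m n P -> has_order m n P r ->
  (0 < d)%N -> (d + d < r)%N -> exists x y, ec_mul m n d P = EPt x y /\ y != 0.
Proof.
move=> hP [_ [hr hlt]] d0 hdr.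
case E: (ec_mul m n d P) => [|x y]; first by exfalso; apply: (hlt d d0 _ E); lia.
exists x, y; split=> //; apply/eqP => y0.
have : ec_mul m n (r - d - d + d)%N P = ec_mul m n (0 + d)%N P.
  by rewrite subnK ?ec_mul_subn ?E ?y0 /= ?oppr0 //; lia.
move/(ec_mul_addnK hP) => /= rd.
by apply: (hlt (r - d - d)%N _ _ rd); lia.
Qed.

Lemma has_order_half d P : on_E m n P -> has_order m n P (d + d) -> (0 < d)%N ->
  exists e, ec_mul m n d P = EPt e 0.
Proof.
move=> hP [_ [hr hlt]] d0; have := ec_mul_subn hP hr (leq_addr d d); rewrite addnK.
case E: (ec_mul m n d P) => [|e y]; first by exfalso; apply: (hlt d d0 _ E); lia.
by move=> [hy]; exists e; congr EPt; move: hy; lra.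
Qed.

Lemma order4_root P : on_E m n P -> has_order m n P 4 ->
  exists e, cubic M N e = 0 /\ shifted_squares M N e.
Proof.
move=> hP hO.
have [x [y [E1 y0]]] := has_order_affine hP hO (d := 1) erefl erefl.
rewrite ec_mul1 in E1; subst P.
have [e E2] := has_order_half hP hO (d := 2) erefl.
have := ec_mul_on 2 hP; rewrite E2 => /= he.
rewrite ec_mulS ec_mul1 in E2.
have [c [l [hR _ _ _]]] := line_cut_ec_add hP hP E2.
exists e; split; first by rewrite /cubic -he expr0n.
exact: shifted_squares_dup hR (on_E_cubic_neq0 hP y0).
Qed.

Lemma order8_root P : on_E m n P -> has_order m n P 8 ->
  exists e, cubic M N e = 0 /\ shifted_squares M N e.
Proof.
move=> hP hO.
have [x [y [E1 y0]]] := has_order_affine hP hO (d := 1) erefl erefl.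
rewrite ec_mul1 in E1; subst P.
have [x2 [y2 [E2 y20]]] := has_order_affine hP hO (d := 2) erefl erefl.
have [x3 [y3 [E3 y30]]] := has_order_affine hP hO (d := 3) erefl erefl.
have [e E4] := has_order_half hP hO (d := 4) erefl.
have hP2 := ec_mul_on 2 hP; have hP3 := ec_mul_on 3 hP; have := ec_mul_on 4 hP.
rewrite E2 in hP2; rewrite E3 in hP3; rewrite E4 => /= he.
rewrite ec_mulS E3 in E4; rewrite ec_mulS E2 in E3; rewrite ec_mulS ec_mul1 in E2.
have [c1 [l1 [R1 _ _ _]]] := line_cut_ec_add hP hP E2.
have [c2 [l2 [R2 _ _ _]]] := line_cut_ec_add hP hP2 E3.
have [c3 [l3 [R3 _ _ _]]] := line_cut_ec_add hP hP3 E4.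
exists e; split; first by rewrite /cubic -he expr0n.
exact: shifted_squares_quadruple R1 R2 R3
  (on_E_cubic_neq0 hP y0) (on_E_cubic_neq0 hP2 y20) (on_E_cubic_neq0 hP3 y30).
Qed.

Lemma order3_dup_fixed P : on_E m n P -> has_order m n P 3 ->
  exists X, shifted_squares M N X /\ 4%:R * cubic M N X * X = (X ^+ 2 - M * N) ^+ 2.
Proof.
move=> hP hO.
have [x [y [E1 y0]]] := has_order_affine hP hO (d := 1) erefl erefl.
rewrite ec_mul1 in E1; subst P.
have [_ [hr _]] := hO; have := ec_mul_subn (d := 1) hP hr erefl.
rewrite (ec_mulS 1) !ec_mul1 => E2.
have [c [l [hR _ _ _]]] := line_cut_ec_add hP hP E2.
exists x; split; first exact: shifted_squares_dup hR (on_E_cubic_neq0 hP y0).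
exact: line_cut_dup hR.
Qed.

Lemma order6_dup_fixed P : on_E m n P -> has_order m n P 6 ->
  exists X, shifted_squares M N X /\ 4%:R * cubic M N X * X = (X ^+ 2 - M * N) ^+ 2.
Proof.
move=> hP hO.
have [x [y [E1 y0]]] := has_order_affine hP hO (d := 1) erefl erefl.
rewrite ec_mul1 in E1; subst P.
have [x2 [y2 [E2 y20]]] := has_order_affine hP hO (d := 2) erefl erefl.
have [e E3] := has_order_half hP hO (d := 3) erefl.
have hP2 := ec_mul_on 2 hP; have := ec_mul_on 3 hP.
rewrite E2 in hP2; rewrite E3 => /= he.
rewrite ec_mulS E2 in E3; rewrite ec_mulS ec_mul1 in E2.
have [c1 [l1 [R1 _ _ _]]] := line_cut_ec_add hP hP E2.
have [c2 [l2 [R2 _ _ hy3]]] := line_cut_ec_add hP hP2 E3.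
have hx := on_E_cubic_neq0 hP y0.
exists x2; split; first exact: shifted_squares_dup R1 hx.
apply: (line_cut_dup_fixed R1 R2 _ _ hx); last by rewrite /cubic -he expr0n.
by apply/eqP; rewrite -oppr_eq0 -hy3.
Qed.

End GroupLaw.

Lemma phi_on m n X0 X1 X2 X3 :
  X0 ^+ 2 + m%:~R * X1 ^+ 2 = X2 ^+ 2 -> X0 ^+ 2 + n%:~R * X1 ^+ 2 = X3 ^+ 2 ->
  on_E m n (phi m n X0 X1 X2 X3).
Proof.
rewrite /phi; set M : rat := m%:~R; set N : rat := n%:~R => h1 h2.
case: eqP => [//| /eqP hT] /=; apply: cubic_dehomogenize hT _.
apply/eqP; rewrite -subr_eq0; apply/eqP.
transitivity (M ^+ 2 * N ^+ 2 * (M - N) ^+ 2 *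
  ((X3 - X0) * (X2 ^+ 2 - (X0 ^+ 2 + M * X1 ^+ 2))
   + (X0 - X2) * (X3 ^+ 2 - (X0 ^+ 2 + N * X1 ^+ 2)))); first by ring.
by rewrite h1 h2 !subrr; ring.
Qed.

Lemma concordant_torsion_point r m n : concordant_torsion r m n ->
  exists P, on_E m n P /\ has_order m n P r.
Proof.
case=> X0 [X1 [X2 [X3 [h1 h2 _ hO]]]].
by exists (phi m n X0 X1 X2 X3); split; first exact: phi_on.
Qed.

(** * Squarefree numbers and rational squares *)

Local Close Scope ring_scope.

Lemma rat_square_natE (A : nat) (z : rat) : (A%:R = z ^+ 2)%R ->
  exists D C : nat, 0 < D /\ A * D ^ 2 = C ^ 2.
Proof.
move=> hA; have b0 : ((denq z)%:~R != 0 :> rat)%R by rewrite intr_eq0 denq_neq0.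
have E : (Posz A * denq z ^+ 2 = numq z ^+ 2)%R.
  apply: (@intr_inj rat); rewrite rmorphM !rmorphXn /=.
  by rewrite (_ : ((Posz A)%:~R = A%:R :> rat)%R) // hA -{1}[z]divq_num_den; field.
exists `|denq z|, `|numq z|; split; first by rewrite absz_gt0 denq_neq0.
by have := congr1 absz E; rewrite abszM !abszX absz_nat.
Qed.

Lemma logn_square_even l A (z : rat) : 0 < A -> (A%:R = z ^+ 2)%R -> ~~ odd (logn l A).
Proof.
move=> A0 /rat_square_natE [D [C [D0 h]]].
have C0 : 0 < C.
  have : 0 < C ^ 2 by rewrite -h muln_gt0 A0 expn_gt0 D0.
  by rewrite expn_gt0 orbF.
have := congr1 (logn l) h; rewrite lognM ?expn_gt0 ?D0 // !lognX => /(congr1 odd).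
by rewrite oddD !oddM /= addbF => ->.
Qed.

Lemma squarefree_logn k l : squarefree k -> prime l -> l %| k -> logn l k = 1.
Proof.
case=> k0 hsq pl lk; have kE : k = k %/ l * l by rewrite divnK.
have k'0 : 0 < k %/ l by rewrite divn_gt0 ?prime_gt0 // dvdn_leq.
have nd : ~~ (l %| k %/ l).
  by apply: contra (hsq l (prime_gt1 pl)) => h; rewrite kE; apply: dvdn_mul.
rewrite kE (lognM _ k'0 (prime_gt0 pl)) (logn_prime _ pl) eqxx.
by rewrite logn_coprime ?prime_coprime.
Qed.

Lemma squarefree_dvd_cofactor k A l (z : rat) : squarefree k -> prime l -> l %| k ->
  0 < A -> ((k * A)%:R = z ^+ 2)%R -> l %| A.
Proof.
move=> hk pl lk A0 /(logn_square_even l) hsq.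
have k0 : 0 < k by case: hk.
move: hsq; rewrite muln_gt0 k0 A0 => /(_ erefl).
rewrite lognM // (squarefree_logn hk pl lk) /= => /negbNE hA.
have : 0 < logn l A by case: (logn l A) hA.
by rewrite logn_gt0 mem_primes => /and3P[].
Qed.

Lemma squarefree_eq1 p q k (z1 z2 : rat) : 0 < p -> coprime p q -> squarefree k ->
  ((k * p)%:R = z1 ^+ 2)%R -> ((k * (p + q))%:R = z2 ^+ 2)%R -> k = 1.
Proof.
move=> p0 cpq hk h1 h2; have k0 : 0 < k by case: hk.
case: (ltngtP k 1) => [| k1 | //]; first by rewrite ltnS leqn0 => /eqP k00; rewrite k00 in k0.
have pl := pdiv_prime k1; have lk := pdiv_dvd k.
have lp := squarefree_dvd_cofactor hk pl lk p0 h1.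
have := squarefree_dvd_cofactor hk pl lk (ltn_addr q p0) h2.
rewrite dvdn_addr // => lq.
have : pdiv k %| gcdn p q by rewrite dvdn_gcd lp lq.
by rewrite (eqP cpq) dvdn1 => /eqP l1; move: (prime_gt1 pl); rewrite l1.
Qed.

Lemma squarefree_3nat k : squarefree k -> (forall l, prime l -> l %| k -> l = 3) ->
  k = 1 \/ k = 3.
Proof.
case=> k0 hsq h3.
have k3 : 3.-nat k by apply/pnatP => // l pl lk; rewrite (h3 l pl lk).
have kE : k = 3 ^ logn 3 k by rewrite -p_part part_pnat_id.
have : logn 3 k < 2.
  rewrite ltnNge -(pfactor_dvdn 2 _ k0) //; exact: hsq.
by move: kE; case: (logn 3 k) => [|[|]] // -> _; [left | right].
Qed.

Local Open Scope ring_scope.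

Lemma coprime_quartic_prime (a b : int) l : prime l -> coprime `|a| `|b| ->
  (l %| `|(a ^+ 3 * (a - 2%:R * b))%R|)%N -> (l %| `|(b ^+ 3 * (2%:R * a - b))%R|)%N ->
  l = 3%N.
Proof.
move=> pl cab; have dvdzE' (z : int) : (l %| `|z|)%N = (Posz l %| z)%Z by rewrite dvdzE.
have not_both : ~ ((Posz l %| a)%Z /\ (Posz l %| b)%Z).
  rewrite -!dvdzE' => -[la lb].
  have : (l %| gcdn `|a| `|b|)%N by rewrite dvdn_gcd la lb.
  by rewrite (eqP cab) dvdn1 => /eqP l1; move: (prime_gt1 pl); rewrite l1.
rewrite !abszM !Euclid_dvdM // !orbb !dvdzE' => /orP[ha | ha] /orP[hb | hb].
- by case: not_both.
- case: not_both; split=> //.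
  by rewrite (_ : b = 2%:R * a - (2%:R * a - b)); [rewrite rpredB ?dvdz_mull | ring].
- case: not_both; split=> //.
  by rewrite (_ : a = (a - 2%:R * b) + 2%:R * b); [rewrite rpredD ?dvdz_mull | ring].
have h3a : (Posz l %| 3%:R * a)%Z.
  rewrite (_ : 3%:R * a = 2%:R * (2%:R * a - b) - (a - 2%:R * b)); last by ring.
  by rewrite rpredB ?dvdz_mull.
have h3b : (Posz l %| 3%:R * b)%Z.
  rewrite (_ : 3%:R * b = (2%:R * a - b) - 2%:R * (a - 2%:R * b)); last by ring.
  by rewrite rpredB ?dvdz_mull.
have l3 : (l %| 3)%N -> l = 3%N by move=> h; apply/eqP; rewrite -(dvdn_prime2 pl).
move: h3a h3b; rewrite -!dvdzE' !abszM !Euclid_dvdM // !dvdzE'.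
case/orP=> [/l3 // | la]; case/orP=> [/l3 // | lb].
by case: not_both.
Qed.

(** * The forms [X^2 - pkY^2] and [X^2 + qkY^2] *)

Section QuarticDescent.

Variables (p q k : nat) (u t : rat).
Hypotheses (p0 : (0 < p)%N) (cpq : coprime p q) (hk : squarefree k).
Hypotheses (u0 : u != 0) (t0 : t != 0).
Hypotheses (hp : - (p * k)%N%:R = u ^+ 2 * t * (t - 2%:R))
           (hq : (q * k)%N%:R = u ^+ 2 * (1 - 2%:R * t) / t ^+ 2).

(* [t = a/b] in lowest terms; clearing denominators in [hp] and [hq] gives
   [p Y = q X] and makes [k (|X| / p)] a rational square. *)
Let a := numq t.
Let b := denq t.
Let X : int := a ^+ 3 * (a - 2%:R * b).
Let Y : int := b ^+ 3 * (2%:R * a - b).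

Let ab0 : (a * b)%:~R != 0 :> rat.
Proof. by rewrite intr_eq0 mulf_neq0 ?numq_eq0 ?denq_neq0. Qed.

Let hX : (p * k)%N%:R * (a * b)%:~R ^+ 2 = - (u ^+ 2 * X%:~R) :> rat.
Proof.
have b0 : b%:~R != 0 :> rat by rewrite intr_eq0 denq_neq0.
rewrite -[(p * k)%N%:R]opprK hp -(divq_num_den t) -/a -/b /X.
rewrite !(rmorphM, rmorphXn, rmorphB) /=; field; exact: b0.
Qed.

Let hY : (q * k)%N%:R * (a * b)%:~R ^+ 2 = - (u ^+ 2 * Y%:~R) :> rat.
Proof.
have b0 : b%:~R != 0 :> rat by rewrite intr_eq0 denq_neq0.
have a0 : a%:~R != 0 :> rat by rewrite intr_eq0 numq_eq0.
rewrite hq -(divq_num_den t) -/a -/b /Y.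
rewrite !(rmorphM, rmorphXn, rmorphB) /=; field.
by rewrite a0 b0.
Qed.

Let XY : (p * `|Y| = q * `|X|)%N.
Proof.
have eX : u ^+ 2 * X%:~R = - ((p * k)%N%:R * (a * b)%:~R ^+ 2) by rewrite hX opprK.
have eY : u ^+ 2 * Y%:~R = - ((q * k)%N%:R * (a * b)%:~R ^+ 2) by rewrite hY opprK.
have u2 : u ^+ 2 != 0 by rewrite sqrf_eq0.
have : (Posz p)%:~R * Y%:~R = (Posz q)%:~R * X%:~R :> rat.
  by apply: (mulfI u2); rewrite mulrCA eY [RHS]mulrCA eX !natrM; ring.
rewrite -!intrM => /intr_inj.
by move/(congr1 absz); rewrite !abszM !absz_nat.
Qed.

Lemma quartic_descent_smooth : k = 1%N \/ k = 3%N.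
Proof.
have pX : (p %| `|X|)%N by rewrite -(Gauss_dvdr _ cpq) -XY dvdn_mulr.
set H := (`|X| %/ p)%N.
have XE : (`|X| = H * p)%N by rewrite divnK.
have YE : (`|Y| = q * H)%N.
  by apply/eqP; rewrite -(eqn_pmul2l p0) XY XE; apply/eqP; ring.
have pR0 : p%:R != 0 :> rat by rewrite pnatr_eq0 -lt0n.
have habs : (p * k)%N%:R * (a * b)%:~R ^+ 2 = u ^+ 2 * (`|X|%N)%:R :> rat.
  have := congr1 (fun x : rat => `|x|) hX; rewrite /= normrN !normrM normr_nat.
  by rewrite -!expr2 !real_normK ?num_real // -intr_norm -natr_absz => ->.
have hH : k%:R * (a * b)%:~R ^+ 2 = u ^+ 2 * H%:R :> rat.
  by apply: (mulfI pR0); rewrite mulrA -natrM habs XE natrM; ring.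
have H0 : (0 < H)%N.
  rewrite lt0n; apply/eqP => H00; move: hH; rewrite H00 mulr0 => /eqP.
  rewrite mulf_eq0 pnatr_eq0 sqrf_eq0 (negbTE ab0) orbF => /eqP k0.
  by case: hk; rewrite k0.
have sqH : (k * H)%N%:R = (k%:R * (a * b)%:~R / u) ^+ 2 :> rat.
  have HE : H%:R = k%:R * (a * b)%:~R ^+ 2 / u ^+ 2 :> rat by rewrite hH; field.
  by rewrite natrM HE; field.
apply: squarefree_3nat => // l pl lk.
have lH := squarefree_dvd_cofactor hk pl lk H0 sqH.
apply: (coprime_quartic_prime pl (coprime_num_den t)).
- by change (l %| `|X|)%N; rewrite XE dvdn_mulr.
- by change (l %| `|Y|)%N; rewrite YE dvdn_mull.
Qed.

End QuarticDescent.

Section TheForms.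

Variables p q k : nat.
Hypotheses (p0 : (0 < p)%N) (q0 : (0 < q)%N) (cpq : coprime p q) (hk : squarefree k).
Local Notation M := (- (p * k)%N%:R : rat).
Local Notation N := ((q * k)%N%:R : rat).

Lemma root_squares_eq1 e : cubic M N e = 0 -> shifted_squares M N e -> k = 1%N.
Proof.
have pk0 : 0 < (p * k)%N%:R :> rat by rewrite ltr0n muln_gt0 p0; case: hk.
move=> /eqP; rewrite /cubic !mulf_eq0 => /orP[/orP[] | ] /eqP he [[z1 h1] [z2 h2] [z3 h3]].
- by move: (sqr_ge0 z2); rewrite -h2 he add0r oppr_ge0 leNgt pk0.
- have eE : e = (p * k)%N%:R by rewrite -[e]subr0 -he; ring.
  apply: (squarefree_eq1 p0 cpq hk (z1 := z1) (z2 := z3)).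
    by rewrite mulnC -eE.
  by rewrite -h3 eE -natrD mulnC mulnDl.
- have eE : e = - N by rewrite -[e]subr0 -he; ring.
  move: (sqr_ge0 z2); rewrite -h2 eE -opprD oppr_ge0 leNgt.
  by rewrite ltr_wpDl ?ler0n.
Qed.

Lemma dup_fixed_squares_eq1_or_3 X : shifted_squares M N X ->
  4%:R * cubic M N X * X = (X ^+ 2 - M * N) ^+ 2 -> k = 1%N \/ k = 3%N.
Proof.
move=> hsq hq.
have MN0 : M * N != 0.
  by rewrite mulf_neq0 // ?oppr_eq0 pnatr_eq0 -lt0n muln_gt0 ?p0 ?q0; case: hk.
have [u [v [w [u0 eM eN hrel]]]] := dup_fixed_triangle MN0 hsq hq.
have [t0 ev ew] := triangle_param u0 hrel.
by apply: (quartic_descent_smooth p0 cpq hk u0 t0); rewrite -?ev -?ew.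
Qed.

End TheForms.

Local Close Scope ring_scope.

Theorem theorem4p1 (p q k : nat) :
  (0 < p)%N -> (0 < q)%N -> coprime p q -> squarefree k ->
  let m : int := (- Posz (p * k)%N)%R in
  let n : int := Posz (q * k)%N in
  ((concordant_torsion 4 m n \/ concordant_torsion 8 m n) -> k = 1%N) /\
  ((concordant_torsion 3 m n \/ concordant_torsion 6 m n) -> k = 1%N \/ k = 3%N).
Proof.
move=> p0 q0 cpq hk m n.
have mE : (m%:~R = - (p * k)%:R :> rat)%R by rewrite rmorphN.
have nE : (n%:~R = (q * k)%:R :> rat)%R by [].
have pk0 : (0 < (p * k)%:R :> rat)%R by rewrite ltr0n muln_gt0 p0; case: hk.
have qk0 : (0 < (q * k)%:R :> rat)%R by rewrite ltr0n muln_gt0 q0; case: hk.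
have hM : (m%:~R != 0 :> rat)%R by rewrite mE oppr_eq0 gt_eqF.
have hN : (n%:~R != 0 :> rat)%R by rewrite gt_eqF.
have hMN : (m%:~R != n%:~R :> rat)%R by rewrite mE lt_eqF // (lt_trans _ qk0) // oppr_lt0.
split=> [hc | hc].
- have [e [he hsq]] : exists e, cubic (m%:~R : rat) n%:~R e = 0%R /\ shifted_squares m%:~R n%:~R e.
    case: hc => /concordant_torsion_point [P [hP hO]];
      [exact: (order4_root hM hN hMN hP hO) | exact: (order8_root hM hN hMN hP hO)].
  by rewrite mE nE in he hsq; exact: (root_squares_eq1 p0 cpq hk he hsq).
- have [X [hsq hq]] : exists X, shifted_squares (m%:~R : rat) n%:~R X /\
      (4%:R * cubic m%:~R n%:~R X * X = (X ^+ 2 - m%:~R * n%:~R) ^+ 2)%R.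
    case: hc => /concordant_torsion_point [P [hP hO]];
      [exact: (order3_dup_fixed hM hN hMN hP hO) | exact: (order6_dup_fixed hM hN hMN hP hO)].
  by rewrite mE nE in hsq hq; exact: (dup_fixed_squares_eq1_or_3 p0 q0 cpq hk hsq hq).
Qed.
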